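(* There is a universal constant $C>0$ such that the following holds. Let $(\pi,Q)$ and $(\tilde\pi,\tilde Q)$ be two reversible Markov generators (with their stationary distributions) on a finite set $\Omega$, let $\mathcal W$ be a $(Q,\tilde Q)$-flow, and suppose $\pi(\omega)\le a\,\tilde\pi(\omega)$ for all $\omega\in\Omega$, for some $a>0$. Suppose $(\Omega,\tilde\pi,\tilde Q)$ satisfies the MLSI with constant $\tilde\alpha(\tilde Q)$. Then for every $r\ge2$, the $r$-regularized MLSI constant $\alpha_r(Q)$ of $(\Omega,\pi,Q)$ (the smallest constant in the $r$-regularized MLSI) satisfies $$\alpha_r(Q)\le C\,a\,A(\mathcal W,r)\,\tilde\alpha(\tilde Q),$$ where $$A(\mathcal W,r):=\max_{(\omega,\omega'):\,\omega\ne\omega',\,Q(\omega,\omega')>0}\frac{1}{\pi(\omega)Q(\omega,\omega')}\sum_{\mathcal P\in\Gamma(Q,\tilde Q):\,(\omega,\omega')\in\mathcal P}\mathcal W(\mathcal P)\big(1+(|\mathcal P|-1)^2\log r\big),$$ $|\mathcal P|$ is the length (number of steps) of $\mathcal P$, and $(\omega,\omega')\in\mathcal P$ means that $\omega,\omega'$ are consecutive vertices of $\mathcal P$.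
   Context: For a positive function $f$, ${\rm Ent}_\pi(f):=\mathbb E_\pi[f(\log f-\log\mathbb E_\pi f)]$, $\mathcal E_\pi(\log f,f):=\frac12\sum_{\omega,\omega'}\pi(\omega)Q(\omega,\omega')(f(\omega)-f(\omega'))\log\frac{f(\omega)}{f(\omega')}$ (analogously for $(\tilde\pi,\tilde Q)$). MLSI with constant $\alpha$: ${\rm Ent}_\pi(f)\le\alpha\,\mathcal E_\pi(\log f,f)$ for all $f:\Omega\to(0,\infty)$. The graph induced by $Q$ on $\Omega$ joins distinct $\omega,\omega'$ iff $Q(\omega,\omega')\ne0$, with graph distance ${\rm dist}$. A function $f>0$ is $r$-regular if $f(\omega)/f(\omega')\le r^{{\rm dist}(\omega,\omega')}$ for all $\omega,\omega'$; the $r$-regularized MLSI with constant $\alpha_r$ means ${\rm Ent}_\pi(f)\le\alpha_r\mathcal E_\pi(\log f,f)$ for all $r$-regular $f$. For $x,y$ with $\tilde Q(x,y)>0$, $\mathcal P_{x,y}$ is the set of paths $x_0=x,x_1,\dots,x_k=y$ ($k\ge1$) with $Q(x_i,x_{i+1})>0$ for all $i$; $\Gamma(Q,\tilde Q):=\bigcup_{x,y:\tilde Q(x,y)>0}\mathcal P_{x,y}$. A $(Q,\tilde Q)$-flow is a function $\mathcal W:\Gamma(Q,\tilde Q)\to[0,1]$ with $\sum_{P\in\mathcal P_{x,y}}\mathcal W(P)=\tilde\pi(x)\tilde Q(x,y)$ for all $x,y$ with $\tilde Q(x,y)>0$. *)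

From HB Require Import structures.
From mathcomp Require Import all_boot all_order all_algebra.
From mathcomp Require Import all_classical all_reals all_analysis.
Set Implicit Arguments. Unset Strict Implicit. Unset Printing Implicit Defensive.
Import Order.TTheory GRing.Theory Num.Theory.
Local Open Scope classical_set_scope.
Local Open Scope ring_scope.

Section Defs.
Variables (R : realType) (T : finType).

Definition rev_generator (pi : T -> R) (Q : T -> T -> R) : Prop :=
  [/\ (forall x, 0 < pi x), \sum_(x : T) pi x = 1,
      (forall x y, x != y -> 0 <= Q x y),
      (forall x, \sum_(y : T) Q x y = 0) &
      (forall x y, pi x * Q x y = pi y * Q y x)].

Definition expect (pi : T -> R) (f : T -> R) : R := \sum_(x : T) pi x * f x.

Definition Ent (pi : T -> R) (f : T -> R) : R :=
  \sum_(x : T) pi x * (f x * (ln (f x) - ln (expect pi f))).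

Definition Dir (pi : T -> R) (Q : T -> T -> R) (f : T -> R) : R :=
  2^-1 * \sum_(x : T) \sum_(y : T)
     pi x * Q x y * ((f x - f y) * ln (f x / f y)).

Definition MLSI (pi : T -> R) (Q : T -> T -> R) (alpha : R) : Prop :=
  forall f : T -> R, (forall x, 0 < f x) -> Ent pi f <= alpha * Dir pi Q f.

Definition adjQ (Q : T -> T -> R) : rel T := fun u v => (u != v) && (Q u v != 0).

Definition walk_len (Q : T -> T -> R) (k : nat) (x y : T) : Prop :=
  exists s : seq T, [/\ size s = k, path (adjQ Q) x s & last x s = y].

(* f is r-regular: f x / f y <= r ^ dist(x,y) for all x y
   (equivalently, for r >= 1, <= r^k for every walk length k) *)
Definition regular (Q : T -> T -> R) (r : R) (f : T -> R) : Prop :=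
  forall x y k, walk_len Q k x y -> f x / f y <= r ^+ k.

Definition MLSI_reg (pi : T -> R) (Q : T -> T -> R) (r alpha : R) : Prop :=
  forall f : T -> R, (forall x, 0 < f x) -> regular Q r f ->
    Ent pi f <= alpha * Dir pi Q f.

Definition alpha_reg (pi : T -> R) (Q : T -> T -> R) (r : R) : \bar R :=
  ereal_inf [set x%:E | x in [set alpha | MLSI_reg pi Q r alpha]].

Definition isPath (Q : T -> T -> R) (x y : T) (p : seq T) : bool :=
  match p with
  | [::] => false
  | x0 :: s => [&& x0 == x, s != [::], last x0 s == y &
                  path (fun u v => 0 < Q u v) x0 s]
  end.

Definition Gamma (Q Qt : T -> T -> R) : set (seq T) :=
  [set p | exists x y, 0 < Qt x y /\ isPath Q x y p].

Definition plen (p : seq T) : nat := (size p).-1.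

Definition edge_in (w w' : T) (p : seq T) : bool := (w, w') \in zip p (behead p).

Definition is_flow (pit : T -> R) (Q Qt : T -> T -> R) (W : seq T -> R) : Prop :=
  (forall p, Gamma Q Qt p -> 0 <= W p <= 1) /\
  (forall x y, 0 < Qt x y ->
     (\esum_(p in [set p | isPath Q x y p]) (W p)%:E = (pit x * Qt x y)%:E)%E).

Definition Aflow (pi : T -> R) (Q Qt : T -> T -> R) (W : seq T -> R) (r : R)
  : \bar R :=
  (\big[maxe/-oo]_(e : T * T | (e.1 != e.2) && (0 < Q e.1 e.2)%R)
     ((pi e.1 * Q e.1 e.2)^-1%:E *
      \esum_(p in [set p | Gamma Q Qt p /\ edge_in e.1 e.2 p])
         (W p * (1 + ((plen p)%:R - 1) ^+ 2 * ln r))%:E))%E.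

End Defs.

From HB Require Import structures.
From mathcomp Require Import all_boot all_order all_algebra.
From mathcomp Require Import all_classical all_reals all_analysis.
From mathcomp Require Import ring lra.
Import Order.TTheory GRing.Theory Num.Theory.
Local Open Scope classical_set_scope.
Local Open Scope ring_scope.
Set Implicit Arguments. Unset Strict Implicit. Unset Printing Implicit Defensive.

(* Write [d(u, v) = (u - v) ln (u / v)] for the summand of [E(log f, f)].  For
   [|ln (u / v)| <= M] one has [(sqrt u - sqrt v)^2 <= d(u, v) <= (sqrt u - sqrt v)^2 (M + 4)].
   Let [f] be [r]-regular and [P] a [Q]-path from [x] to [y].  Shorten [P] to a simple walk
   with [k <= |P|] steps; regularity bounds [|ln (f x / f y)|] by [k ln r], and Cauchy-Schwarz
   on the telescoping sum of [sqrt f] along the walk gives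
   [d(f x, f y) <= k (k ln r + 4) * sum of d over the edges of P], and for [k >= 2]
   [k (k ln r + 4) <= (5 + 8 / ln 2) (1 + (|P| - 1)^2 ln r)] (for [k = 1] the walk is a
   single edge of [P]).
   Averaging over the flow [W] and regrouping by edges bounds [E_pit(log f, f)] by
   [(5 + 8 / ln 2) A(W, r) E_pi(log f, f)].  On the entropy side,
   [Ent_pi f = min_c sum_x pi x (f x ln (f x / c) - f x + c)] and [pi <= a pit] give
   [Ent_pi f <= a Ent_pit f]; the MLSI for [(pit, Qt)] then closes the argument.  When [Q]
   has no edges, [A(W, r) = -oo], both Dirichlet forms vanish and [alpha_r(Q) = -oo]. *)

Section DirTerm.
Variable R : realType.
Implicit Types u v x M : R.

Definition dirterm u v : R := (u - v) * ln (u / v).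

Lemma ln_le_subr1 x : 0 < x -> ln x <= x - 1.
Proof.
move=> x0; have := @le_ln1Dx R (x - 1).
by rewrite addrCA subrr addr0; apply; lra.
Qed.

Lemma dirtermxx u : dirterm u u = 0.
Proof. by rewrite /dirterm subrr mul0r. Qed.

Lemma dirtermC u v : 0 < u -> 0 < v -> dirterm u v = dirterm v u.
Proof. by move=> u0 v0; rewrite /dirterm -invf_div lnV ?posrE ?divr_gt0 //; ring. Qed.

Lemma dirterm_ge0 u v : 0 < u -> 0 < v -> 0 <= dirterm u v.
Proof.
move=> u0 v0; rewrite /dirterm; have [uv|vu] := leP u v.
  by apply: mulr_le0; [lra | apply: ln_le0; rewrite ler_pdivrMr // mul1r].
by apply: mulr_ge0; [lra | apply: ln_ge0; rewrite ler_pdivlMr // mul1r ltW].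
Qed.

Lemma sqr_sub_le_mul_dirterm u v : 0 < v -> v <= u -> (u - v) ^+ 2 <= u * dirterm u v.
Proof.
move=> v0 vu; have u0 : 0 < u by exact: lt_le_trans vu.
have := ln_le_subr1 (divr_gt0 v0 u0).
rewrite -invf_div lnV ?posrE ?divr_gt0 // => hln.
have -> : (u - v) ^+ 2 = u * ((u - v) * (1 - v / u)).
  by field; rewrite gt_eqF.
by rewrite ler_pM2l //; apply: ler_wpM2l; lra.
Qed.

Lemma sqr_sub_sqrt_le_dirterm u v : 0 < u -> 0 < v ->
  (Num.sqrt u - Num.sqrt v) ^+ 2 <= dirterm u v.
Proof.
wlog vu : u v / v <= u.
  move=> H u0 v0; have [|uv] := leP v u; first by move=> ?; exact: H.
  by rewrite dirtermC // -sqrrN opprB; apply: H => //; exact: ltW.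
move=> u0 v0; set a := Num.sqrt u; set b := Num.sqrt v.
have b0 : 0 < b by rewrite sqrtr_gt0.
have ua : u = a ^+ 2 by rewrite sqr_sqrtr // ltW.
have vb : v = b ^+ 2 by rewrite sqr_sqrtr // ltW.
have ba : b <= a by rewrite ler_sqrt // ltW.
have a0 : 0 < a by exact: lt_le_trans ba.
suff : a ^+ 2 * (a - b) ^+ 2 <= a ^+ 2 * dirterm u v by rewrite ler_pM2l ?exprn_gt0.
rewrite -ua; apply: le_trans (sqr_sub_le_mul_dirterm v0 vu); rewrite ua vb.
(* (a^2 - b^2)^2 - a^2 (a - b)^2 = (a - b)^2 (2 a b + b^2) *)
have : 0 <= (a - b) ^+ 2 * (2 * a * b + b ^+ 2) by apply: mulr_ge0; [exact: sqr_ge0 | nra].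
nra.
Qed.

Lemma dirterm_le_sqr_sub_sqrt u v M : 0 < u -> 0 < v ->
  ln (u / v) <= M -> ln (v / u) <= M ->
  dirterm u v <= (Num.sqrt u - Num.sqrt v) ^+ 2 * (M + 4).
Proof.
wlog uv : u v / u <= v.
  move=> H u0 v0 h1 h2; have [|vu] := leP u v; first by move=> ?; exact: H.
  by rewrite dirtermC // -sqrrN opprB; apply: H => //; exact: ltW.
move=> u0 v0 _ hM; set a := Num.sqrt u; set b := Num.sqrt v.
have a0 : 0 < a by rewrite sqrtr_gt0.
have ua : u = a ^+ 2 by rewrite sqr_sqrtr // ltW.
have vb : v = b ^+ 2 by rewrite sqr_sqrtr // ltW.
have ab : a <= b by rewrite ler_sqrt // ltW.
set L := ln (v / u).
have L0 : 0 <= L by apply: ln_ge0; rewrite ler_pdivlMr // mul1r.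
have hL : L = 2 * ln (b / a).
  by rewrite /L ua vb -expr_div_n lnXn ?divr_gt0 ?(lt_le_trans a0) // mulr_natl.
have haL : a * L <= 2 * (b - a).
  have : a * ln (b / a) <= a * (b / a - 1).
    by rewrite ler_pM2l //; apply: ln_le_subr1; rewrite divr_gt0 ?(lt_le_trans a0).
  rewrite mulrBr mulr1 [a * (b / a)]mulrC divfK ?gt_eqF // hL; lra.
rewrite dirtermC // /dirterm -/L ua vb.
have h1 : 0 <= (b - a) * (2 * (b - a) - a * L) by apply: mulr_ge0; lra.
have h2 : 0 <= (b - a) ^+ 2 * (M - L) by apply: mulr_ge0; [exact: sqr_ge0 | rewrite subr_ge0].
nra.
Qed.

End DirTerm.

Definition edges {A : Type} (l : seq A) : seq (A * A) := zip l (behead l).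

Lemma edges_consl {A : eqType} (a : A) l : {subset edges l <= edges (a :: l)}.
Proof. by case: l => [|b l] //= z; rewrite inE => ->; rewrite orbT. Qed.

Lemma size_edges {A : Type} (l : seq A) : size (edges l) = (size l).-1.
Proof. by case: l => [|a l] //; rewrite /edges size_zip /= (minn_idPr (leqnSn _)). Qed.

Lemma path_edges {A : Type} (e : rel A) x s :
  path e x s = all (fun q => e q.1 q.2) (edges (x :: s)).
Proof. by elim: s x => [|y s IH] x //=; rewrite IH. Qed.

Lemma uniq_edges {A : eqType} (l : seq A) : uniq l -> uniq (edges l).
Proof.
case: l => [|a l] //= /andP[_ ul].
have : uniq (unzip2 (zip (a :: l) l)) by rewrite unzip2_zip.
exact: map_uniq.
Qed.

Lemma path_mem_edges {A : eqType} (x : A) s :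
  path (fun u v => (u, v) \in edges (x :: s)) x s.
Proof.
elim: s x => [|y s IH] x //=; rewrite inE eqxx /=.
by apply: sub_path (IH y) => u v; apply: edges_consl.
Qed.

Lemma simple_subwalk {A : eqType} (x : A) s : exists s',
  [/\ last x s' = last x s, uniq (x :: s'), (size s' <= size s)%N &
      {subset edges (x :: s') <= edges (x :: s)}].
Proof.
case: (shortenP (path_mem_edges x s)) => s' hs' us' sub.
exists s'; split => //.
- by apply: (uniq_leq_size _ sub); case/andP: us'.
- by move: hs'; rewrite path_edges => /allP h [u v] /h.
Qed.

Section RealSeq.
Variable R : realFieldType.

Lemma mul_sum_le {A : Type} (h : A -> R) (s : seq A) c :
  2 * c * \sum_(e <- s) h e <= \sum_(e <- s) h e ^+ 2 + (size s)%:R * c ^+ 2.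
Proof.
elim: s => [|a s IH]; first by rewrite !big_nil mul0r mulr0 addr0.
rewrite !big_cons /= -[(size s).+1]addn1 natrD.
have : 0 <= (h a - c) ^+ 2 by exact: sqr_ge0.
lra.
Qed.

Lemma sqr_sum_le {A : Type} (h : A -> R) (s : seq A) :
  (\sum_(e <- s) h e) ^+ 2 <= (size s)%:R * \sum_(e <- s) h e ^+ 2.
Proof.
elim: s => [|a s IH]; first by rewrite !big_nil expr0n /= mul0r.
rewrite !big_cons /= -[(size s).+1]addn1 natrD.
have := mul_sum_le h s (h a).
have : 0 <= (size s)%:R :> R by [].
nra.
Qed.

Lemma telescope_edges {A : Type} (g : A -> R) x s :
  g (last x s) - g x = \sum_(e <- edges (x :: s)) (g e.2 - g e.1).
Proof.
elim: s x => [|y s IH] x /=; first by rewrite big_nil subrr.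
by rewrite big_cons /= -IH; ring.
Qed.

End RealSeq.

Section Generator.
Variables (R : realType) (T : finType) (pi : T -> R) (Q : T -> T -> R).
Hypothesis hg : rev_generator pi Q.

Lemma generator_diag_le0 x : Q x x <= 0.
Proof.
case: hg => _ _ Qge0 Qsum _; have := Qsum x; rewrite (bigD1 x) //=.
have : 0 <= \sum_(y | y != x) Q x y.
  by apply: sumr_ge0 => y yx; apply: Qge0; rewrite eq_sym.
lra.
Qed.

Lemma generator_gt0_neq x y : 0 < Q x y -> x != y.
Proof.
by apply: contraTneq => ->; rewrite -leNgt generator_diag_le0.
Qed.

Lemma generator_offdiag_eq0 x y : x != y -> ~~ (0 < Q x y) -> Q x y = 0.
Proof.
by case: hg => _ _ Qge0 _ _ xy; rewrite -leNgt => Q0; apply/eqP; rewrite eq_le Q0 Qge0.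
Qed.

Lemma adjQC x y : adjQ Q x y = adjQ Q y x.
Proof.
case: hg => pi0 _ _ _ rev; rewrite /adjQ eq_sym; congr (_ && _).
have e z w : (Q z w != 0) = (pi z * Q z w != 0) by rewrite mulf_eq0 (gt_eqF (pi0 z)).
by rewrite e rev -e.
Qed.

Lemma adjQ_gt0 x y : 0 < Q x y -> adjQ Q x y.
Proof. by move=> Qxy; rewrite /adjQ generator_gt0_neq // gt_eqF. Qed.

Lemma walk_lenC k x y : walk_len Q k x y -> walk_len Q k y x.
Proof.
move=> [s [hs hp hl]]; exists (rev (belast x s)); split.
- by rewrite size_rev size_belast.
- by rewrite -hl rev_path; apply: sub_path hp => u v /=; rewrite adjQC.
- by case: s hs hp hl => [|a s] _ _ /= hl; rewrite ?hl // rev_cons last_rcons.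
Qed.

End Generator.

Definition path_const {R : realType} : R := 5 + 8 / ln 2.

Definition path_weight {R : realType} {T : finType} (r : R) (p : seq T) : R :=
  1 + ((plen p)%:R - 1) ^+ 2 * ln r.

Definition path_energy {R : realType} {T : finType} (f : T -> R) (p : seq T) : R :=
  \sum_(e : T * T | edge_in e.1 e.2 p) dirterm (f e.1) (f e.2).

Section PathConst.
Variable R : realType.

Lemma ln2_gt0 : 0 < ln (2 : R).
Proof. by apply: ln_gt0; lra. Qed.

Lemma path_const_gt0 : 0 < path_const :> R.
Proof. by apply: ltr_wpDr; [rewrite divr_ge0 ?ltW ?ln2_gt0 | lra]. Qed.

Lemma path_weight_ge0 (T : finType) (r : R) (p : seq T) : 1 <= r -> 0 <= path_weight r p.
Proof.
move=> r1; rewrite /path_weight; apply: addr_ge0 => //.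
by apply: mulr_ge0; [exact: sqr_ge0 | exact: ln_ge0].
Qed.

Lemma path_const_weight_ge1 (T : finType) (r : R) (p : seq T) :
  1 <= r -> 1 <= path_const * path_weight r p.
Proof.
move=> r1; have : 0 <= ((plen p)%:R - 1) ^+ 2 * ln r.
  by apply: mulr_ge0; [exact: sqr_ge0 | exact: ln_ge0].
have : 0 <= 8 / ln (2 : R) by rewrite divr_ge0 ?ltW ?ln2_gt0.
rewrite /path_const /path_weight; nra.
Qed.

Lemma path_const_bound (k K L : R) : 2 <= k -> k <= K -> ln 2 <= L ->
  k * (k * L + 4) <= path_const * (1 + (K - 1) ^+ 2 * L).
Proof.
move=> k2 kK L2; have L0 := @ln2_gt0.
set c := 8 / ln (2 : R).
have c0 : 0 <= c by rewrite divr_ge0 ?ltW.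
have cL : c * ln 2 = 8 by rewrite mulfVK ?gt_eqF.
have h1 : k ^+ 2 <= 4 * (K - 1) ^+ 2 by nra.
have h2 : 4 * k <= 8 * (K - 1) ^+ 2 by nra.
have h3 : 8 * (K - 1) ^+ 2 <= c * ((K - 1) ^+ 2 * L).
  by rewrite -cL -mulrA ler_wpM2l // mulrC ler_wpM2l ?sqr_ge0.
have h4 : 0 <= (K - 1) ^+ 2 * L by apply: mulr_ge0; [exact: sqr_ge0 | lra].
have h5 : k ^+ 2 * L <= 4 * (K - 1) ^+ 2 * L by apply: ler_wpM2r => //; lra.
rewrite /path_const -/c; nra.
Qed.

End PathConst.

Section PathComparison.
Variables (R : realType) (T : finType) (pi : T -> R) (Q : T -> T -> R).
Hypothesis hg : rev_generator pi Q.
Variables (r : R) (f : T -> R).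
Hypotheses (r2 : 2 <= r) (f0 : forall x, 0 < f x) (freg : regular Q r f).

Let r1 : 1 <= r. Proof. by apply: le_trans r2; rewrite ler1n. Qed.
Let r0 : 0 < r. Proof. exact: lt_le_trans r1. Qed.

Lemma ln_regular k x y : walk_len Q k x y -> ln (f x / f y) <= k%:R * ln r.
Proof.
move=> /freg.
by rewrite -ler_ln ?posrE ?divr_gt0 ?exprn_gt0 // lnXn // mulr_natl.
Qed.

Lemma dirterm_le_walk x s : path (adjQ Q) x s ->
  dirterm (f x) (f (last x s)) <=
  (size s)%:R * ((size s)%:R * ln r + 4) *
    \sum_(e <- edges (x :: s)) dirterm (f e.1) (f e.2).
Proof.
move=> hp; have hw : walk_len Q (size s) x (last x s) by exists s.
have := dirterm_le_sqr_sub_sqrt (f0 _) (f0 _) (ln_regular hw) (ln_regular (walk_lenC hg hw)).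
move/le_trans; apply; have Lr : 0 <= ln r by exact: ln_ge0.
rewrite [in X in _ <= X]mulrAC; apply: ler_wpM2r.
  by apply: addr_ge0 => //; exact: mulr_ge0.
rewrite -sqrrN opprB (telescope_edges (fun z => Num.sqrt (f z))).
apply: le_trans (sqr_sum_le _ _) _; rewrite size_edges ler_wpM2l //.
by apply: ler_sum => -[u v] _; rewrite -sqrrN opprB; exact: sqr_sub_sqrt_le_dirterm.
Qed.

Lemma sum_edges_le_path_energy l p : uniq l -> {subset edges l <= edges p} ->
  \sum_(e <- edges l) dirterm (f e.1) (f e.2) <= path_energy f p.
Proof.
move=> ul sub; rewrite big_uniq ?uniq_edges //.
rewrite /path_energy [X in _ <= X]big_mkcond [X in X <= _]big_mkcond /=.
apply: ler_sum => -[u v] _ /=; case: ifP => [/sub h|_]; first by rewrite ifT.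
by case: ifP => _ //; exact: dirterm_ge0.
Qed.

Lemma path_energy_ge0 p : 0 <= path_energy f p.
Proof. by apply: sumr_ge0 => e _; exact: dirterm_ge0. Qed.

Lemma dirterm_le_path x y p : isPath Q x y p -> x != y ->
  dirterm (f x) (f y) <= path_const * path_weight r p * path_energy f p.
Proof.
case: p => [|x0 s] //= /and4P[/eqP-> _ /eqP hy hpath] xy.
have [s' [hl hu hs hsub]] := simple_subwalk x s.
have hpath' : path (adjQ Q) x s'.
  move: hpath; rewrite !path_edges => /allP hpath.
  by apply/allP => e /hsub /hpath; exact: (adjQ_gt0 hg (x := e.1)).
have hE := sum_edges_le_path_energy hu hsub.
have hk := dirterm_le_walk hpath'; rewrite hl hy in hk.
have hC := path_const_weight_ge1 (x :: s) r1.
have E0 := path_energy_ge0 (x :: s).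
case: s' => [|b [|c s']] in hl hu hs hsub hpath' hE hk *.
- by move: xy; rewrite -hy -hl eqxx.
- rewrite /= in hl; rewrite -hy -hl.
  move: hE; rewrite /edges /= big_cons big_nil addr0 => hE.
  by apply: le_trans hE _; rewrite -{1}[path_energy _ _]mul1r ler_wpM2r.
- apply: le_trans hk _; apply: ler_pM => //.
  + by rewrite mulr_ge0 // addr_ge0 // mulr_ge0 // ln_ge0.
  + by apply: sumr_ge0 => e _; exact: dirterm_ge0.
  + by apply: path_const_bound; rewrite ?ler_nat // ler_ln ?posrE.
Qed.

End PathComparison.

Section Entropy.
Variables (R : realType) (T : finType) (pi : T -> R).
Hypotheses (pi0 : forall x, 0 < pi x) (pi1 : \sum_x pi x = 1).

(* the Bregman divergence of [u ln u] *)
Definition psi (u c : R) : R := u * (ln u - ln c) - u + c.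

Lemma psi_ge0 u c : 0 < u -> 0 < c -> 0 <= psi u c.
Proof.
move=> u0 c0; have := ln_le_subr1 (divr_gt0 c0 u0).
rewrite ln_div ?posrE // -(ler_pM2l u0) [X in _ <= X]mulrBr mulr1.
rewrite [u * (c / u)]mulrC divfK ?gt_eqF // /psi; lra.
Qed.

Lemma psi_gt0 u c : 0 < u -> 0 < c -> u != c -> 0 < psi u c.
Proof.
move=> u0 c0 uc; have hne : ln (c / u) != 0.
  rewrite ln_eq0 ?divr_gt0 //; apply: contra uc => /eqP h.
  by rewrite -[c](divfK (lt0r_neq0 u0)) h mul1r.
have := expR_gt1Dx hne; rewrite lnK ?posrE ?divr_gt0 // ln_div ?posrE //.
rewrite -(ltr_pM2l u0) mulrDr mulr1 [u * (c / u)]mulrC divfK ?gt_eqF // /psi; lra.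
Qed.

Lemma psixx u : psi u u = 0.
Proof. by rewrite /psi subrr mulr0 sub0r addNr. Qed.

Lemma expect_gt0 f : (forall x, 0 < f x) -> 0 < expect pi f.
Proof.
move=> f0; have [x0 _] : exists x : T, true.
  case: (pickP (fun _ : T => true)) => [x _|h]; first by exists x.
  by move: pi1; rewrite big_pred0 // => /eqP; rewrite eq_sym oner_eq0.
rewrite /expect (bigD1 x0) //=; apply: ltr_pwDl; first exact: mulr_gt0.
by apply: sumr_ge0 => x _; apply: mulr_ge0; apply: ltW.
Qed.

Lemma sum_psiE f c : \sum_x pi x * psi (f x) c = Ent pi f + psi (expect pi f) c.
Proof.
set m := expect pi f.
apply/eqP; rewrite addrC -subr_eq; apply/eqP; rewrite /Ent -sumrB.
have -> : \sum_x (pi x * psi (f x) c - pi x * (f x * (ln (f x) - ln m)))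
    = \sum_x (pi x * f x * (ln m - ln c) - pi x * f x + c * pi x).
  by apply: eq_bigr => x _; rewrite /psi; ring.
rewrite !big_split /= -mulr_suml sumrN -mulr_sumr pi1 -/(expect pi f) -/m /psi; ring.
Qed.

Lemma EntE f : Ent pi f = \sum_x pi x * psi (f x) (expect pi f).
Proof. by rewrite sum_psiE psixx addr0. Qed.

Lemma Ent_le_sum_psi f c : (forall x, 0 < f x) -> 0 < c ->
  Ent pi f <= \sum_x pi x * psi (f x) c.
Proof. by move=> f0 c0; rewrite sum_psiE lerDl psi_ge0 ?expect_gt0. Qed.

Lemma exists_Ent_gt0 (x y : T) : x != y -> exists f, (forall z, 0 < f z) /\ 0 < Ent pi f.
Proof.
move=> xy; pose f z : R := if z == x then 2 else 1.
have f0 z : 0 < f z by rewrite /f; case: ifP.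
exists f; split => //; rewrite EntE.
have m0 := expect_gt0 f0.
have [z hz] : exists z, f z != expect pi f.
  case: (eqVneq (f x) (expect pi f)) => [e|]; last by exists x.
  by exists y; rewrite -e /f eqxx (ifN_eqC _ _ xy); apply/eqP; lra.
rewrite (bigD1 z) //=; apply: ltr_pwDl; first by rewrite mulr_gt0 ?psi_gt0.
by apply: sumr_ge0 => w _; rewrite mulr_ge0 ?psi_ge0 ?ltW.
Qed.

End Entropy.

Lemma Ent_le_scale (R : realType) (T : finType) (pi pit f : T -> R) a :
  (forall x, 0 < pi x) -> \sum_x pi x = 1 ->
  (forall x, 0 < pit x) -> \sum_x pit x = 1 ->
  (forall x, 0 < f x) -> (forall x, pi x <= a * pit x) ->
  Ent pi f <= a * Ent pit f.
Proof.
move=> pi0 pi1 pit0 pit1 f0 hpa; have m0 := expect_gt0 pit0 pit1 f0.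
apply: le_trans (Ent_le_sum_psi pi0 pi1 f0 m0) _.
rewrite EntE // mulr_sumr; apply: ler_sum => x _; rewrite mulrA.
by apply: ler_wpM2r => //; apply: psi_ge0.
Qed.

Section Esum.
Variables (R : realType) (U : choiceType).
Local Open Scope ereal_scope.

Lemma ge0_esumZl (I : set U) (a : U -> \bar R) (c : R) : (0 <= c)%R ->
  (forall i, I i -> 0 <= a i) ->
  \esum_(i in I) (c%:E * a i) = c%:E * \esum_(i in I) a i.
Proof.
move=> c0 a0; rewrite esum_mkcond [in RHS]esum_mkcond /esum -ereal_supZl //; last first.
  by apply/set0P; exists (\sum_(x \in set0) (if x \in I then a x else 0)), set0.
rewrite image_comp; congr ereal_sup; apply: eq_imagel => A _ /=.
rewrite ge0_mule_fsumr; last by move=> i; case: ifPn => // /set_mem /a0.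
by apply: eq_fsbigr => i _; case: ifP; rewrite ?mule0.
Qed.

Lemma sum_esum_le_disjoint (J : finType) (g : U -> \bar R) (B : J -> set U) (G : set U) :
  (forall j, B j `<=` G) -> (forall p j j', B j p -> B j' p -> j = j') ->
  (forall p, G p -> 0 <= g p) ->
  \sum_(j : J) \esum_(p in B j) g p <= \esum_(p in G) g p.
Proof.
move=> BG Buniq g0.
have e j : \esum_(p in B j) g p = \esum_(p in G) (if p \in B j then g p else 0).
  by rewrite -esum_mkcondr setIidr.
under eq_bigr do rewrite e.
rewrite -esum_sum; last by move=> p j Gp _; case: ifP => // _; apply: g0.
apply: le_esum => p Gp; case: (pickP (fun j => p \in B j)) => [j0 hj0|h].
  rewrite (bigD1 j0) //= hj0 big1 ?adde0 // => j /negPf jj0; case: ifP => // /set_mem hj.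
  by move: jj0; rewrite (Buniq p j j0 hj (set_mem hj0)) eqxx.
by rewrite big1 ?g0 // => j _; rewrite h.
Qed.

End Esum.

Section DirichletForm.
Variables (R : realType) (T : finType).
Implicit Types (pi f : T -> R) (Q : T -> T -> R).

Definition Dir2 pi Q f : R :=
  \sum_(q : T * T) pi q.1 * Q q.1 q.2 * dirterm (f q.1) (f q.2).

Lemma DirE pi Q f : Dir pi Q f = 2^-1 * Dir2 pi Q f.
Proof. by rewrite /Dir pair_big. Qed.

Lemma Dir2_ge0 pi Q f : rev_generator pi Q -> (forall x, 0 < f x) -> 0 <= Dir2 pi Q f.
Proof.
case=> pi0 _ Qge0 _ _ f0; apply: sumr_ge0 => -[x y] _ /=.
have [->|xy] := eqVneq x y; first by rewrite dirtermxx mulr0.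
by apply: mulr_ge0; [apply: mulr_ge0; [exact: ltW | exact: Qge0] | exact: dirterm_ge0].
Qed.

Lemma Dir2_eq0 pi Q f : (forall x y, x != y -> Q x y = 0) -> Dir2 pi Q f = 0.
Proof.
move=> Q0; apply: big1 => -[x y] _ /=.
by have [->|/Q0 ->] := eqVneq x y; rewrite ?dirtermxx ?mulr0 ?mul0r.
Qed.

Lemma isPath_edge_gt0 Q x y p u v : isPath Q x y p -> edge_in u v p -> 0 < Q u v.
Proof.
case: p => [|x0 s] //= /and4P[_ _ _ hp] he.
by move: hp; rewrite path_edges => /allP /(_ _ he).
Qed.

Lemma isPath_ends Q x y x' y' p : isPath Q x y p -> isPath Q x' y' p -> x = x' /\ y = y'.
Proof. by case: p => [|x0 s] //= /and4P[/eqP <- _ /eqP <- _] /and4P[/eqP <- _ /eqP <- _]. Qed.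

Definition flow_paths (Q Qt : T -> T -> R) (x y : T) : set (seq T) :=
  [set p | 0 < Qt x y /\ isPath Q x y p].

Local Open Scope ereal_scope.

Lemma esum_path_energy f (P : set (seq T)) (g : seq T -> R) :
  (forall x, 0 < f x)%R -> (forall p, P p -> 0 <= g p)%R ->
  \esum_(p in P) (g p * path_energy f p)%:E =
  \sum_(e : T * T) (dirterm (f e.1) (f e.2))%:E *
     \esum_(p in P `&` [set p | edge_in e.1 e.2 p]) (g p)%:E.
Proof.
move=> f0 g0.
have d0 (e : T * T) : (0 <= dirterm (f e.1) (f e.2))%R by exact: dirterm_ge0.
transitivity (\esum_(p in P) \sum_(e : T * T)
    (if edge_in e.1 e.2 p then (dirterm (f e.1) (f e.2))%:E * (g p)%:E else 0)).
  apply: eq_esum => p _; rewrite /path_energy mulr_sumr -sumEFin big_mkcond.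
  by apply: eq_bigr => e _; case: ifP => // _; rewrite -EFinM mulrC.
rewrite esum_sum; last by move=> p e /g0 gp _; case: ifP => // _; rewrite -EFinM lee_fin mulr_ge0.
apply: eq_bigr => e _; rewrite -ge0_esumZl // ?esum_mkcondr; last first.
  by move=> p [/g0]; rewrite lee_fin.
apply: eq_esum => p _; rewrite (_ : (p \in _) = edge_in e.1 e.2 p) //.
by apply/idP/idP => [/set_mem|/mem_set].
Qed.

Lemma Aflow_ge_edge pi Q (Qt : T -> T -> R) (W : seq T -> R) (r : R) (u v : T) :
  u != v -> (0 < Q u v)%R ->
  (pi u * Q u v)^-1%:E *
    (\esum_(p in Gamma Q Qt `&` [set p | edge_in u v p]) (W p * path_weight r p)%:E)
  <= Aflow pi Q Qt W r.
Proof.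
move=> uv Quv; have := @le_bigmax_cond _ _ _ (-oo) (u, v)
  (fun e : T * T => (e.1 != e.2) && (0 < Q e.1 e.2)%R)
  (fun e : T * T => (pi e.1 * Q e.1 e.2)^-1%:E *
    \esum_(p in Gamma Q Qt `&` [set p | edge_in e.1 e.2 p]) (W p * path_weight r p)%:E).
by rewrite /= uv Quv; apply.
Qed.

End DirichletForm.

Section FlowComparison.
Variables (R : realType) (T : finType) (pi pit : T -> R) (Q Qt : T -> T -> R).
Variables (W : seq T -> R) (r : R) (f : T -> R).
Hypotheses (hg : rev_generator pi Q) (hgt : rev_generator pit Qt) (hfl : is_flow pit Q Qt W).
Hypotheses (r2 : 2 <= r) (f0 : forall x, 0 < f x) (freg : regular Q r f).

Let r1 : 1 <= r. Proof. by apply: le_trans r2; rewrite ler1n. Qed.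

Let W_ge0 p : Gamma Q Qt p -> 0 <= W p.
Proof. by case/(hfl.1 p)/andP. Qed.

Let weight_ge0 p : Gamma Q Qt p -> 0 <= W p * path_weight r p.
Proof. by move=> /W_ge0 W0; rewrite mulr_ge0 ?path_weight_ge0. Qed.

Let flow_paths_Gamma x y : flow_paths Q Qt x y `<=` Gamma Q Qt.
Proof. by move=> p hp; exists x, y. Qed.

Local Open Scope ereal_scope.

Lemma flow_dirterm_le x y :
  (pit x * Qt x y * dirterm (f x) (f y))%:E <=
  path_const%:E * \esum_(p in flow_paths Q Qt x y)
                    (W p * path_weight r p * path_energy f p)%:E.
Proof.
have C0 := ltW (@path_const_gt0 R).
have [Qxy|Qxy] := ltP 0%R (Qt x y); last first.
  apply: (@le_trans _ _ 0); last first.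
    apply: mule_ge0; first by rewrite lee_fin.
    apply: esum_ge0 => p /flow_paths_Gamma hp.
    by rewrite lee_fin mulr_ge0 ?weight_ge0 ?path_energy_ge0.
  rewrite lee_fin; have [->|xy] := eqVneq x y; first by rewrite dirtermxx mulr0.
  by rewrite (generator_offdiag_eq0 hgt xy) -?leNgt // mulr0 mul0r.
have xy := generator_gt0_neq hgt Qxy.
have -> : flow_paths Q Qt x y = [set p | isPath Q x y p].
  by apply/seteqP; split=> p; [case | split].
have Wxy p : isPath Q x y p -> (0 <= W p)%R by move=> hp; apply: W_ge0; exists x, y.
rewrite mulrC EFinM -(hfl.2 x y Qxy) -!ge0_esumZl ?dirterm_ge0 //; last first.
  move=> p /Wxy W0; rewrite lee_fin mulr_ge0 ?path_energy_ge0 //.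
  by rewrite mulr_ge0 ?path_weight_ge0.
apply: le_esum => p hp; rewrite -!EFinM lee_fin.
rewrite [X in (_ <= X)%R](_ : _ = W p * (path_const * path_weight r p * path_energy f p))%R;
  last by ring.
by rewrite mulrC ler_wpM2l ?Wxy // (dirterm_le_path hg r2 f0 freg hp xy).
Qed.

Lemma flow_pair_bound x y :
  (pit x * Qt x y * dirterm (f x) (f y))%:E <=
  path_const%:E * \sum_(e : T * T) (dirterm (f e.1) (f e.2))%:E *
     \esum_(p in flow_paths Q Qt x y `&` [set p | edge_in e.1 e.2 p]) (W p * path_weight r p)%:E.
Proof.
rewrite -esum_path_energy //; first exact: flow_dirterm_le.
by move=> p /flow_paths_Gamma; exact: weight_ge0.
Qed.

Lemma edge_flow_le A u v : u != v -> (0 < Q u v)%R -> Aflow pi Q Qt W r = A%:E ->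
  \esum_(p in Gamma Q Qt `&` [set p | edge_in u v p]) (W p * path_weight r p)%:E
    <= (A * (pi u * Q u v))%:E.
Proof.
move=> uv Quv hA; have piQ0 : (0 < pi u * Q u v)%R by case: hg => pi0 *; rewrite mulr_gt0.
have := @Aflow_ge_edge _ _ pi Q Qt W r u v uv Quv; rewrite hA.
rewrite -(lee_pmul2l (x := (pi u * Q u v)%:E)) ?lte_fin // muleA -EFinM divff ?gt_eqF //.
by rewrite mul1e -EFinM mulrC.
Qed.

Lemma Dir2_flow_le A : Aflow pi Q Qt W r = A%:E ->
  (Dir2 pit Qt f)%:E <= (path_const * A * Dir2 pi Q f)%:E.
Proof.
move=> hA; have C0 := ltW (@path_const_gt0 R).
have d0 (e : T * T) : (0 <= dirterm (f e.1) (f e.2))%R by exact: dirterm_ge0.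
have esum0 (P : set (seq T)) : P `<=` Gamma Q Qt ->
    0 <= \esum_(p in P) (W p * path_weight r p)%:E.
  by move=> PG; apply: esum_ge0 => p /PG; rewrite lee_fin; exact: weight_ge0.
rewrite /Dir2 -sumEFin.
apply: le_trans; first by apply: lee_sum => q _; exact: flow_pair_bound.
rewrite -ge0_sume_distrr; last first.
  move=> q _; apply: sume_ge0 => e _.
  by rewrite mule_ge0 ?lee_fin ?d0 ?esum0 // => p [/flow_paths_Gamma].
rewrite exchange_big -mulrA EFinM mulr_sumr -sumEFin lee_wpmul2l //.
apply: lee_sum => -[u v] _ /=; rewrite -ge0_sume_distrr; last first.
  by move=> q _; apply: esum0 => p [/flow_paths_Gamma].
apply: (@le_trans _ _ ((dirterm (f u) (f v))%:E *
    \esum_(p in Gamma Q Qt `&` [set p | edge_in u v p]) (W p * path_weight r p)%:E)).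
  rewrite lee_wpmul2l ?lee_fin ?(d0 (u, v)) //; apply: sum_esum_le_disjoint.
  - by move=> q p [/flow_paths_Gamma].
  - move=> p [x y] [x' y'] [[_ hp] _] [[_ hp'] _].
    by case: (isPath_ends hp hp') => /= -> ->.
  - by move=> p [hp _]; rewrite lee_fin weight_ge0.
have [<-|uv] := eqVneq u v; first by rewrite dirtermxx mul0e !mulr0.
have [Quv|] := ltP 0%R (Q u v).
  rewrite (_ : (A * _)%:E = (dirterm (f u) (f v))%:E * (A * (pi u * Q u v))%:E).
    by rewrite lee_wpmul2l ?lee_fin ?(d0 (u, v)) ?edge_flow_le.
  by rewrite -EFinM; congr (_%:E); ring.
rewrite leNgt => /(generator_offdiag_eq0 hg uv) Q0.
rewrite Q0 mulr0 mul0r mulr0 esum1 ?mule0 // => p [[x [y [_ hp]]] /(isPath_edge_gt0 hp)].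
by rewrite Q0 ltxx.
Qed.

End FlowComparison.

Lemma alpha_reg_le (R : realType) (T : finType) (pi : T -> R) Q r al :
  MLSI_reg pi Q r al -> (alpha_reg pi Q r <= al%:E)%E.
Proof. by move=> h; apply: ereal_inf_lbound; exists al. Qed.

Lemma MLSI_const_gt0 (R : realType) (T : finType) (pi : T -> R) Q alt (x y : T) :
  rev_generator pi Q -> MLSI pi Q alt -> x != y -> 0 < alt.
Proof.
move=> hg hM xy; have [pi0 pi1 _ _ _] := hg.
have [f [f0 Ent0]] := exists_Ent_gt0 pi0 pi1 xy.
have D0 : 0 <= Dir pi Q f by rewrite DirE mulr_ge0 ?invr_ge0 ?Dir2_ge0.
rewrite ltNge; apply/negP => alt0; have := hM f f0.
have := mulr_le0_ge0 alt0 D0; lra.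
Qed.

Section Comparison.
Variables (R : realType) (T : finType) (pi pit : T -> R) (Q Qt : T -> T -> R).
Variables (W : seq T -> R) (a alt r : R).
Hypotheses (hg : rev_generator pi Q) (hgt : rev_generator pit Qt) (hfl : is_flow pit Q Qt W).
Hypotheses (a0 : 0 < a) (hpa : forall x, pi x <= a * pit x) (hM : MLSI pit Qt alt).
Hypothesis r2 : 2 <= r.

Let Ent_le f : (forall x, 0 < f x) -> Ent pi f <= a * Ent pit f.
Proof. by case: hg => pi0 pi1 *; case: hgt => pit0 pit1 *; exact: Ent_le_scale. Qed.

Local Open Scope ereal_scope.

Lemma alpha_reg_le_flow A : (0 <= alt)%R -> Aflow pi Q Qt W r = A%:E ->
  alpha_reg pi Q r <= (path_const * a * A * alt)%:E.
Proof.
move=> alt0 hA; apply: alpha_reg_le => f f0 freg.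
have hD := Dir2_flow_le hg hgt hfl r2 f0 freg hA; rewrite lee_fin in hD.
apply: le_trans (Ent_le f0) _; have := hM f0; rewrite !DirE => hMf.
apply: le_trans (ler_wpM2l (ltW a0) hMf) _.
rewrite (_ : _ * _ * _ = a * (alt * (2^-1 * (path_const * A * Dir2 pi Q f))))%R; last by ring.
apply: ler_wpM2l; first exact: ltW.
by do 2 apply: ler_wpM2l => //; rewrite invr_ge0.
Qed.

Lemma Aflow_ge0 u v : u != v -> (0 < Q u v)%R -> 0 <= Aflow pi Q Qt W r.
Proof.
move=> uv Quv; apply: le_trans (@Aflow_ge_edge _ _ pi Q Qt W r u v uv Quv).
case: hg => pi0 *; apply: mule_ge0; first by rewrite lee_fin invr_ge0 mulr_ge0 ?ltW.
apply: esum_ge0 => p [hp _]; rewrite lee_fin; have /andP[W0 _] := hfl.1 p hp.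
by rewrite mulr_ge0 // (path_weight_ge0 _ (le_trans _ r2)) ?ler1n.
Qed.

Hypothesis noedge : forall x y, x != y -> Q x y = 0%R.

Lemma flow_no_edge x y : x != y -> Qt x y = 0%R.
Proof.
move=> xy; apply: (generator_offdiag_eq0 hgt xy); apply/negP => Qxy.
have := hfl.2 x y Qxy; rewrite esum1 => [/esym/eqP|p hp].
  by rewrite eqe mulf_eq0 (gt_eqF Qxy) orbF; case: hgt => pit0 _ _ _ _; rewrite gt_eqF.
case: p hp => [|x0 [|b s]] hp //; first by move: hp; rewrite /= andbF.
have /(isPath_edge_gt0 hp) Qb : edge_in x0 b [:: x0, b & s] by rewrite /edge_in /= inE eqxx.
by move: (Qb); rewrite noedge ?ltxx // (generator_gt0_neq hg Qb).
Qed.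

Lemma alpha_reg_no_edge : alpha_reg pi Q r = -oo.
Proof.
have Ent0 f : (forall x, 0 < f x)%R -> (Ent pi f <= 0)%R.
  move=> f0; apply: le_trans (Ent_le f0) _.
  have := hM f0; rewrite DirE Dir2_eq0; last exact: flow_no_edge.
  by rewrite !mulr0 pmulr_rle0.
have le_all al : alpha_reg pi Q r <= al%:E.
  by apply: alpha_reg_le => f f0 _; rewrite DirE Dir2_eq0 // !mulr0; exact: Ent0.
case E: (alpha_reg pi Q r) le_all => [x| |] // le_all.
- by have := le_all (x - 1)%R; rewrite lee_fin lerBrDr gerDl ler10.
- by have := le_all 0%R.
Qed.

End Comparison.

Theorem theorem2 (R : realType) :
  exists C : R, 0 < C /\
  forall (T : finType) (pi : T -> R) (Q : T -> T -> R)
         (pit : T -> R) (Qt : T -> T -> R) (W : seq T -> R) (a alt : R),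
    rev_generator pi Q -> rev_generator pit Qt ->
    is_flow pit Q Qt W ->
    0 < a -> (forall w, pi w <= a * pit w) ->
    MLSI pit Qt alt ->
    forall r : R, 2 <= r ->
      (alpha_reg pi Q r <= (C * a)%:E * Aflow pi Q Qt W r * alt%:E)%E.
Proof.
exists path_const; split; first exact: path_const_gt0.
move=> T pi Q pit Qt W a alt hg hgt hfl a0 hpa hM r r2.
case: (pickP (fun e : T * T => (e.1 != e.2) && (0 < Q e.1 e.2))) =>
  [[u v] /andP[/= uv Quv] | noedge].
  have alt0 := MLSI_const_gt0 hgt hM uv.
  case hA: (Aflow pi Q Qt W r) (Aflow_ge0 hg hfl r2 uv Quv) => [A| |] A0.
  - by rewrite -!EFinM; apply: (alpha_reg_le_flow hg hgt hfl a0 hpa hM r2 (ltW alt0) hA).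
  - by rewrite mulry gtr0_sg ?mul1e ?mulyr ?gtr0_sg ?mul1e ?leey ?mulr_gt0 ?path_const_gt0.
  - by rewrite leeNy_eq in A0.
rewrite (alpha_reg_no_edge r hg hgt hfl a0 hpa hM) ?leNye // => x y xy.
by apply: (generator_offdiag_eq0 hg xy); have := noedge (x, y); rewrite /= xy /= => ->.
Qed.
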